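(* Let $\alpha=(S_g,\alpha_g)_{g\in\mathcal G}$ be a partial action of a connected groupoid $\mathcal G$ on a ring $S$. Let $y,z\in\mathcal G_0$ and let $\tau\in\mathcal G(y,z)$ be such that $S_{\tau^{-1}}=S_y$ and $S_{\tau}=S_z$. Then $S_g=S_{g\tau}$ for every $g\in\mathcal G$ with $s(g)=z$. In particular, if $\alpha$ is unital with $S_g=S1_g$ for central idempotents $1_g$, then $1_g=1_{g\tau}$ for every $g\in\mathcal G$ with $s(g)=z$.
   Context: A groupoid $\mathcal G$ is a small category in which every morphism is invertible; $\mathcal G_0$ denotes its set of objects, identified with the identity morphisms (so $\mathcal G_0\subseteq\mathcal G$). For $g\in\mathcal G$, $s(g)$ and $t(g)$ denote its source and target, $\mathcal G(x,y)=\{g\in\mathcal G: s(g)=x,\ t(g)=y\}$, and the product $gh$ is defined iff $s(g)=t(h)$. $\mathcal G$ is connected if $\mathcal G(x,y)\neq\emptyset$ for all $x,y\in\mathcal G_0$. Rings are associative, not necessarily unital. A partial action $\alpha=(S_g,\alpha_g)_{g\in\mathcal G}$ of $\mathcal G$ on a ring $S$ is a family such that: for each $g$, $S_{t(g)}$ is an ideal of $S$, $S_g$ is an ideal of $S_{t(g)}$, and $\alpha_g:S_{g^{-1}}\to S_g$ is a ring isomorphism; $\alpha_x=\mathrm{id}_{S_x}$ for $x\in\mathcal G_0$; and for all $g,h$ with $s(g)=t(h)$, $\alpha_h^{-1}(S_{g^{-1}}\cap S_h)\subseteq S_{(gh)^{-1}}$ and $\alpha_g(\alpha_h(a))=\alpha_{gh}(a)$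 for all $a\in\alpha_h^{-1}(S_{g^{-1}}\cap S_h)$. The partial action is unital if each $S_g$ is a unital ring, i.e. $S_g=S1_g$ for a central idempotent $1_g$ of $S$. *)

(* Morphisms form the carrier; objects are identified with identity
   morphisms (those x with s x = x).  Product [gmul g h] is meaningful
   only when s g = t h. *)
Record groupoid := Groupoid {
  gmor :> Type;
  gs : gmor -> gmor;
  gt : gmor -> gmor;
  gmul : gmor -> gmor -> gmor;
  ginv : gmor -> gmor;
  gs_s : forall g, gs (gs g) = gs g;
  gt_s : forall g, gt (gs g) = gs g;
  gs_t : forall g, gs (gt g) = gt g;
  gt_t : forall g, gt (gt g) = gt g;
  gs_mul : forall g h, gs g = gt h -> gs (gmul g h) = gs h;
  gt_mul : forall g h, gs g = gt h -> gt (gmul g h) = gt g;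
  gmulA : forall g h k, gs g = gt h -> gs h = gt k ->
            gmul g (gmul h k) = gmul (gmul g h) k;
  gmul_s : forall g, gmul g (gs g) = g;
  gt_mul_id : forall g, gmul (gt g) g = g;
  gs_inv : forall g, gs (ginv g) = gt g;
  gt_inv : forall g, gt (ginv g) = gs g;
  gmulV : forall g, gmul g (ginv g) = gt g;
  gVmul : forall g, gmul (ginv g) g = gs g
}.

Definition is_obj (G : groupoid) (x : G) : Prop := gs G x = x.

Definition connected (G : groupoid) : Prop :=
  forall x y : G, is_obj G x -> is_obj G y ->
    exists g : G, gs G g = x /\ gt G g = y.

Record nuring := NURing {
  rcar :> Type;
  radd : rcar -> rcar -> rcar;
  ropp : rcar -> rcar;
  rzero : rcar;
  rmul : rcar -> rcar -> rcar;
  raddA : forall a b c, radd a (radd b c) = radd (radd a b) c;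
  raddC : forall a b, radd a b = radd b a;
  radd0 : forall a, radd a rzero = a;
  raddN : forall a, radd a (ropp a) = rzero;
  rmulA : forall a b c, rmul a (rmul b c) = rmul (rmul a b) c;
  rmulDl : forall a b c, rmul (radd a b) c = radd (rmul a c) (rmul b c);
  rmulDr : forall a b c, rmul a (radd b c) = radd (rmul a b) (rmul a c)
}.

Section RingDefs.
Variable S : nuring.

Definition ideal_of (I J : S -> Prop) : Prop :=
  (forall a, J a -> I a) /\
  J (rzero S) /\
  (forall a b, J a -> J b -> J (radd S a b)) /\
  (forall a, J a -> J (ropp S a)) /\
  (forall r a, I r -> J a -> J (rmul S r a) /\ J (rmul S a r)).

Definition ideal (J : S -> Prop) : Prop := ideal_of (fun _ => True) J.

Definition ring_iso_on (A B : S -> Prop) (f : S -> S) : Prop :=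
  (forall a, A a -> B (f a)) /\
  (forall a b, A a -> A b -> f (radd S a b) = radd S (f a) (f b)) /\
  (forall a b, A a -> A b -> f (rmul S a b) = rmul S (f a) (f b)) /\
  (forall a b, A a -> A b -> f a = f b -> a = b) /\
  (forall b, B b -> exists a, A a /\ f a = b).

Definition central_idempotent (e : S) : Prop :=
  rmul S e e = e /\ forall a, rmul S a e = rmul S e a.

End RingDefs.

(* Dom g = S_g, alpha g = alpha_g : S_{g^{-1}} -> S_g *)
Definition partial_action (G : groupoid) (S : nuring)
    (Dom : G -> S -> Prop) (alpha : G -> S -> S) : Prop :=
  (forall g, ideal S (Dom (gt G g))) /\
  (forall g, ideal_of S (Dom (gt G g)) (Dom g)) /\
  (forall g, ring_iso_on S (Dom (ginv G g)) (Dom g) (alpha g)) /\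
  (forall x, is_obj G x -> forall a, Dom x a -> alpha x a = a) /\
  (forall g h, gs G g = gt G h ->
     forall a, Dom (ginv G h) a ->
       Dom (ginv G g) (alpha h a) -> Dom h (alpha h a) ->
       Dom (ginv G (gmul G g h)) a /\
       alpha g (alpha h a) = alpha (gmul G g h) a).

(* If s(g) = t(h) and S_h is all of S_{t(h)}, then every b in S_g is
   b = alpha_g (alpha_h d), and the composition axiom of the partial action
   puts b in S_{gh}; hence S_g is contained in S_{gh}.  Applied to tau and to
   tau^-1 this gives both inclusions S_g = S_{g tau}.  Two central idempotents
   generating the same ideal coincide, which gives 1_g = 1_{g tau}. *)
From Stdlib Require Import Setoid.

Lemma gmulK (G : groupoid) (g h : G) :
  gs G g = gt G h -> gmul G (gmul G g h) (ginv G h) = g.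
Proof.
  intro Hgh.
  rewrite <- gmulA by (rewrite ?gt_inv; easy).
  rewrite gmulV, <- Hgh. apply gmul_s.
Qed.

Section PartialAction.
Variables (G : groupoid) (S : nuring) (Dom : G -> S -> Prop) (alpha : G -> S -> S).
Hypothesis alpha_partial : partial_action G S Dom alpha.

Lemma Dom_sub_Dom_mul (g h : G) :
  gs G g = gt G h ->
  (forall a, Dom (gt G h) a -> Dom h a) ->
  forall b, Dom g b -> Dom (gmul G g h) b.
Proof.
  destruct alpha_partial as [_ [Dom_sub [alpha_iso [_ alpha_comp]]]].
  intros Hgh Dom_h_full b Hb.
  destruct (alpha_iso g) as [_ [_ [_ [_ alpha_g_onto]]]].
  destruct (alpha_g_onto b Hb) as [c [Hc <-]].
  assert (Hch : Dom h c).
  { apply Dom_h_full. rewrite <- Hgh, <- (gt_inv G g).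
    exact (proj1 (Dom_sub (ginv G g)) c Hc). }
  destruct (alpha_iso h) as [_ [_ [_ [_ alpha_h_onto]]]].
  destruct (alpha_h_onto c Hch) as [d [Hd <-]].
  destruct (alpha_comp g h Hgh d Hd Hc Hch) as [Hd_gh ->].
  exact (proj1 (alpha_iso (gmul G g h)) d Hd_gh).
Qed.

End PartialAction.

Lemma central_idempotent_eq (S : nuring) (e f : S) :
  central_idempotent S e -> central_idempotent S f ->
  (forall a, (exists s, a = rmul S s e) <-> (exists s, a = rmul S s f)) ->
  e = f.
Proof.
  intros [ee_e e_central] [ff_f _] same_ideal.
  assert (ef_e : rmul S e f = e).
  { destruct (proj1 (same_ideal e) (ex_intro _ e (eq_sym ee_e))) as [s Hs].
    rewrite Hs at 1. rewrite <- rmulA, ff_f. now symmetry. }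
  assert (fe_f : rmul S f e = f).
  { destruct (proj2 (same_ideal f) (ex_intro _ f (eq_sym ff_f))) as [s Hs].
    rewrite Hs at 1. rewrite <- rmulA, ee_e. now symmetry. }
  now rewrite <- ef_e, <- e_central, fe_f.
Qed.

Theorem proposition2p6 (G : groupoid) (S : nuring)
    (Dom : G -> S -> Prop) (alpha : G -> S -> S) :
  connected G ->
  partial_action G S Dom alpha ->
  forall (y z tau : G),
    is_obj G y -> is_obj G z ->
    gs G tau = y -> gt G tau = z ->
    (forall a, Dom (ginv G tau) a <-> Dom y a) ->
    (forall a, Dom tau a <-> Dom z a) ->
    (forall g : G, gs G g = z ->
       forall a, Dom g a <-> Dom (gmul G g tau) a) /\
    (forall e : G -> S,
       (forall g : G, central_idempotent S (e g) /\
          (forall a, Dom g a <-> exists s, a = rmul S s (e g))) ->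
       forall g : G, gs G g = z -> e g = e (gmul G g tau)).
Proof.
  intros _ alpha_partial y z tau _ _ s_tau t_tau Dom_tauV Dom_tau.
  assert (Dom_mul_tau : forall g, gs G g = z ->
            forall a, Dom g a <-> Dom (gmul G g tau) a).
  { intros g Hg a; split.
    - apply (Dom_sub_Dom_mul _ _ _ _ alpha_partial); [congruence|].
      intro b. rewrite t_tau. apply Dom_tau.
    - rewrite <- (gmulK G g tau) at 2 by congruence.
      apply (Dom_sub_Dom_mul _ _ _ _ alpha_partial).
      + rewrite gs_mul, gt_inv by congruence. reflexivity.
      + intro b. rewrite gt_inv, s_tau. apply Dom_tauV. }
  split; [exact Dom_mul_tau|].
  intros e unital g Hg.
  destruct (unital g) as [e_g Dom_g], (unital (gmul G g tau)) as [e_gtau Dom_gtau].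
  apply central_idempotent_eq; [exact e_g | exact e_gtau |].
  intro a. rewrite <- Dom_g, <- Dom_gtau. exact (Dom_mul_tau g Hg a).
Qed.
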